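(* Let $q\geq 2$ be an integer and $\theta\in\mathbb{Z}$. If $\theta$ is coprime with $q$, or if $q\mid\theta$, then the map $n\mapsto w_q(n)+\theta n$ is uniformly distributed modulo $q$: for every $x\in\mathbb{Z}$ the set $\{n\in\mathbb{N}: w_q(n)+\theta n\equiv x\pmod q\}$ has natural density $1/q$.
   Context: For an integer $q\geq 2$ and $n\in\mathbb{N}$: $v_q(0)=0$ and, for $n>0$, $v_q(n)=\max\{k: q^k\mid n\}$; $w_q(n)=\sum_{i=0}^n v_q(i)$. The natural density of $T\subseteq\mathbb{N}$ is $\lim_{N\to\infty}|\{n\in T: 0\leq n<N\}|/N$. *)

From Stdlib Require Import Reals ZArith.
From mathcomp Require Import all_boot.

(* q-adic valuation: v_q(0) = 0, v_q(n) = max {k : q^k | n} for n > 0.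
   For q >= 2 and n > 0 every such k satisfies k <= n, so the max over
   k < n.+1 is the true maximum. *)
Definition vq (q n : nat) : nat :=
  if n == 0 then 0 else \max_(0 <= k < n.+1 | q ^ k %| n) k.

Definition wq (q n : nat) : nat := \sum_(0 <= i < n.+1) vq q i.

Definition has_density (T : nat -> bool) (d : R) : Prop :=
  Un_cv (fun N => Rdiv (INR (count T (iota 0 N))) (INR N)) d.

(* Splitting n = q m + r with r < q, only multiples of q contribute to w_q, and
   v_q (q k) = 1 + v_q k, so w_q (q m + r) = m + w_q m.  Hence on each block
   [q m, q m + q) the value w_q n + theta n is a constant plus theta r.  When
   theta is a unit mod q, every block meets each residue class exactly once.
   When q | theta, w_q n + theta n is congruent to w_q m + m with m = n / q, so
   each block of length q^2 meets each class q times.  Either way the count up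
   to N is N / q up to a bounded error. *)

From Stdlib Require Import Reals ZArith Lia Lra.
From mathcomp Require Import all_boot zify.

Section Valuation.

Variable q : nat.
Hypothesis q_gt1 : 1 < q.

Lemma vq_dvd n : q ^ vq q n %| n.
Proof.
rewrite /vq; case: eqP => [->|_]; first by rewrite dvdn0.
by apply: (big_ind (fun v => q ^ v %| n)) => // a b; rewrite /maxn; case: ifP.
Qed.

Lemma vq_max n k : 0 < n -> q ^ k %| n -> k <= vq q n.
Proof.
move=> n_gt0 dvd_n; rewrite /vq; case: eqP => [n0|_]; first by rewrite n0 in n_gt0.
apply: (leq_bigmax_seq k) => //; rewrite mem_index_iota /=.
by have := dvdn_leq n_gt0 dvd_n; have := ltn_expl k q_gt1; lia.
Qed.

Lemma vq_eq0 n : ~~ (q %| n) -> vq q n = 0.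
Proof.
have := vq_dvd n; case: (vq q n) => // v; rewrite expnS => dvd_n.
by rewrite (dvdn_trans (dvdn_mulr _ (dvdnn q)) dvd_n).
Qed.

Lemma vq_mulq m : 0 < m -> vq q (q * m) = (vq q m).+1.
Proof.
move=> m_gt0; have q_gt0 : 0 < q by lia.
have qm_gt0 : 0 < q * m by rewrite muln_gt0 q_gt0.
apply/eqP; rewrite eqn_leq; apply/andP; split.
  have := vq_dvd (q * m); case: (vq q (q * m)) => // u.
  by rewrite expnS dvdn_pmul2l // => /(vq_max _ _ m_gt0).
by apply: vq_max => //; rewrite expnS dvdn_pmul2l ?vq_dvd.
Qed.

Lemma wq0 : wq q 0 = 0.
Proof. by rewrite /wq big_nat1 /vq. Qed.

Lemma wqS n : wq q n.+1 = wq q n + vq q n.+1.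
Proof. by rewrite /wq big_nat_recr. Qed.

Lemma wq_mulqD m r : r < q -> wq q (q * m + r) = wq q (q * m).
Proof.
elim: r => [|r IHr] r_lt; first by rewrite addn0.
rewrite addnS wqS IHr 1?vq_eq0 ?addn0 //; last lia.
rewrite -addnS dvdn_addr ?dvdn_mulr //.
by apply/negP => /(dvdn_leq (ltn0Sn r)); lia.
Qed.

Lemma wq_mulq m : wq q (q * m) = m + wq q m.
Proof.
elim: m => [|m IHm]; first by rewrite muln0 wq0.
have -> : q * m.+1 = (q * m + q.-1).+1 by lia.
rewrite wqS wq_mulqD; last lia.
have -> : (q * m + q.-1).+1 = q * m.+1 by lia.
by rewrite vq_mulq // IHm wqS; lia.
Qed.

Lemma wq_block m r : r < q -> wq q (q * m + r) = m + wq q m.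
Proof. by move=> r_lt; rewrite wq_mulqD // wq_mulq. Qed.

End Valuation.

Lemma count_iota_blocks (T : pred nat) L c :
  (forall j, count T (iota (L * j) L) = c) ->
  forall j, count T (iota 0 (L * j)) = c * j.
Proof.
move=> block_count; elim=> [|j IHj]; first by rewrite !muln0.
by rewrite mulnS addnC iotaD count_cat IHj add0n block_count; lia.
Qed.

Lemma count_iota_blocks_bounds (T : pred nat) L c :
  0 < L -> (forall j, count T (iota (L * j) L) = c) ->
  forall N, c * N <= L * count T (iota 0 N) + L * L /\
            L * count T (iota 0 N) <= c * N + L * L.
Proof.
move=> L_gt0 block_count N.
have c_le : c <= L by rewrite -(block_count 0) muln0 -{2}(size_iota 0 L) count_size.
have [j [r [-> r_lt]]] : exists j r, N = L * j + r /\ r < L.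
  by exists (N %/ L), (N %% L); rewrite mulnC -divn_eq ltn_mod.
have := count_size T (iota (L * j) r); rewrite size_iota.
rewrite iotaD count_cat (@count_iota_blocks T L c block_count).
move: (count _ _) => k k_le.
have cr_le : c * r <= L * L by apply: leq_mul; lia.
have Lk_le : L * k <= L * L by rewrite leq_mul2l; lia.
split; nia.
Qed.

Open Scope R_scope.

Lemma Un_cv_div_INR (a : nat -> R) (d K : R) :
  (forall N, d * INR N - K <= a N <= d * INR N + K) ->
  Un_cv (fun N => a N / INR N) d.
Proof.
move=> bounded eps eps_gt0.
have K_ge0 : 0 <= K by have := bounded 0%N; rewrite /= Rmult_0_r; lra.
have [n0 n0_gt] := INR_unbounded (K / eps).
exists n0.+1 => n n_ge; rewrite /R_dist.
have n_gt0 : 0 < INR n by apply: lt_0_INR; apply/ltP; lia.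
have K_lt : K < eps * INR n.
  have : INR n0 < INR n by apply: lt_INR; lia.
  have : K / eps * eps = K by field; lra.
  nra.
have [lo hi] := bounded n.
have : (a n / INR n - d) * INR n = a n - d * INR n by field; lra.
move: (a n / INR n - d) => e e_eq.
by apply: Rabs_def1; nra.
Qed.

Lemma has_density_of_block_count (T : pred nat) L c :
  (0 < L)%N -> (forall j, count T (iota (L * j) L) = c) ->
  has_density T (INR c / INR L).
Proof.
move=> L_gt0 block_count; apply: (@Un_cv_div_INR _ _ (INR L)) => N.
have [lo hi] := @count_iota_blocks_bounds T L c L_gt0 block_count N.
have L_pos : 0 < INR L by apply: lt_0_INR; apply/ltP.
have lo' := le_INR _ _ (elimT leP lo); have hi' := le_INR _ _ (elimT leP hi).
rewrite !(plus_INR, mult_INR) in lo' hi'.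
move: (INR (count T (iota 0 N))) lo' hi' => k lo' hi'.
have scaled : INR L * (k - INR c / INR L * INR N) = INR L * k - INR c * INR N.
  by field; lra.
split; nra.
Qed.

Close Scope R_scope.

Lemma count_iota_divn (U : pred nat) q a b : 0 < q ->
  count (fun n => U (n %/ q)) (iota (q * a) (q * b)) = q * count U (iota a b).
Proof.
move=> q_gt0; elim: b => [|b IHb]; first by rewrite muln0.
rewrite mulnS addnC iotaD count_cat IHb -addn1 iotaD count_cat /= addn0 -mulnDr.
rewrite -(addn0 (q * (a + b))) iotaDl count_map.
rewrite (@eq_in_count _ _ (fun _ => U (a + b)) (iota 0 q)); last first.
  move=> r; rewrite mem_iota => /andP[_ r_lt] /=.
  by rewrite mulnC divnMDl // divn_small ?addn0 //; lia.
by case: (U (a + b)); rewrite ?count_predT ?count_pred0 ?size_iota; lia.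
Qed.

Open Scope Z_scope.

Lemma coprime_linear_root_uniq (q th B r r' : Z) :
  Z.gcd th q = 1 -> (q | B + th * r) -> (q | B + th * r') ->
  0 <= r < q -> 0 <= r' < q -> r = r'.
Proof.
move=> coprime_th root_r root_r' r_range r'_range.
have : (q | th * (r - r')).
  have := Z.divide_sub_r _ _ _ root_r root_r'.
  by rewrite Z.mul_sub_distr_l; congr Z.divide; ring.
rewrite Z.gcd_comm in coprime_th.
move=> /Z.gauss /(_ coprime_th) [k diff_eq].
by have [k_lt0|[k0|k_gt0]] := Z.lt_trichotomy k 0; nia.
Qed.

Lemma coprime_linear_root (q th B : Z) :
  0 < q -> Z.gcd th q = 1 -> exists2 r, 0 <= r < q & (q | B + th * r).
Proof.
move=> q_gt0 /Z.gcd_bezout [u [v bezout]].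
exists ((- u * B) mod q); first exact: Z.mod_pos_bound.
rewrite Zmod_eq_full; last lia.
exists (v * B - th * (- u * B / q)).
by rewrite -[X in X + _ = _]Z.mul_1_r -bezout; ring.
Qed.

Lemma Zmod_eqb0P (q x : Z) : q <> 0 -> reflect (q | x) (x mod q =? 0).
Proof. by move=> q_neq0; apply: (iffP (Z.eqb_spec _ _)); move/Z.mod_divide; apply. Qed.

Lemma count_coprime_linear_root (q : nat) (th B : Z) :
  (0 < q)%N -> Z.gcd th (Z.of_nat q) = 1 ->
  count (fun r => (B + th * Z.of_nat r) mod Z.of_nat q =? 0) (iota 0 q) = 1%N.
Proof.
move=> q_gt0 coprime_th; have q_pos : 0 < Z.of_nat q by lia.
have q_neq0 : Z.of_nat q <> 0 by lia.
have [r0 r0_range root_r0] := coprime_linear_root _ _ B q_pos coprime_th.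
have r0_lt : (Z.to_nat r0 < q)%N by apply/ltP; lia.
have -> : 1%N = count (pred1 (Z.to_nat r0)) (iota 0 q).
  by rewrite (count_uniq_mem _ (iota_uniq 0 q)) mem_iota ?add0n r0_lt.
apply: eq_in_count => r; rewrite mem_iota => /andP[_ r_lt] /=.
apply/(Zmod_eqb0P _ _ q_neq0)/eqP => [root_r|->]; last by rewrite Z2Nat.id //; lia.
apply/Nat2Z.inj; rewrite Z2Nat.id; last lia.
by apply: (coprime_linear_root_uniq _ _ _ _ _ coprime_th root_r root_r0); lia.
Qed.

Close Scope Z_scope.

Definition wq_congr (q : nat) (theta x : Z) (n : nat) : bool :=
  Z.eqb (Z.modulo (Z.of_nat (wq q n) + theta * Z.of_nat n - x) (Z.of_nat q)) 0.

Lemma count_wq_congr_block q theta x j :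
  1 < q -> Z.gcd theta (Z.of_nat q) = 1%Z ->
  count (wq_congr q theta x) (iota (q * j) q) = 1.
Proof.
move=> q_gt1 coprime_th; have q_gt0 : 0 < q by lia.
rewrite -(addn0 (q * j)) iotaDl count_map.
rewrite -(count_coprime_linear_root _ _
            (Z.of_nat (j + wq q j) + theta * Z.of_nat (q * j) - x) q_gt0 coprime_th).
apply: eq_in_count => r; rewrite mem_iota add0n => /andP[_ r_lt] /=.
rewrite /wq_congr wq_block //.
by rewrite !Nat2Z.inj_add; congr (Z.eqb (Z.modulo _ _) _); ring.
Qed.

Lemma wq_congr_divq q theta x :
  1 < q -> (Z.of_nat q | theta)%Z ->
  wq_congr q theta x =1 (fun n => wq_congr q 1 x (n %/ q)).
Proof.
move=> q_gt1 [t ->] n; rewrite /wq_congr.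
have n_eq : n = q * (n %/ q) + n %% q by rewrite mulnC -divn_eq.
rewrite {1}n_eq wq_block //; last by rewrite ltn_mod; lia.
rewrite -(Z.mod_add (_ + 1 * _ - _) (t * Z.of_nat n)); last lia.
by congr (Z.eqb (Z.modulo _ _) _); lia.
Qed.

Theorem proposition3p4 (q : nat) (theta : Z) :
  (2 <= q)%nat ->
  (Z.gcd theta (Z.of_nat q) = 1%Z \/ Z.divide (Z.of_nat q) theta) ->
  forall x : Z,
    has_density
      (fun n : nat =>
         Z.eqb (Z.modulo (Z.of_nat (wq q n) + theta * Z.of_nat n - x) (Z.of_nat q)) 0%Z)
      (Rinv (INR q)).
Proof.
move=> q_gt1 [coprime_th|q_dvd] x.
all: change (has_density (wq_congr q theta x) (Rinv (INR q))).
  have -> : Rinv (INR q) = Rdiv (INR 1) (INR q) by rewrite /= /Rdiv Rmult_1_l.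
  apply: has_density_of_block_count; first lia.
  by move=> j; apply: count_wq_congr_block.
have -> : Rinv (INR q) = Rdiv (INR q) (INR (q * q)).
  by rewrite mult_INR; field; apply: not_0_INR; lia.
apply: has_density_of_block_count; first lia.
move=> j; rewrite (eq_count (wq_congr_divq _ _ x q_gt1 q_dvd)) -mulnA.
rewrite count_iota_divn; last lia.
by rewrite count_wq_congr_block ?muln1 // Z.gcd_1_l.
Qed.
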